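(* In the setting and notation described in the context, assume (A5) and (A6). Then for every $\gamma_0$ with $0<\gamma_0<\tilde\gamma_0=(1-\gamma_{10})/2$, as $n\to\infty$, $$P\left(\{\Delta_{p_0,n}\le n^{-\gamma_0}\}\cap\{\Delta_{2,n}\le n^{-\gamma_0}\}\cap\{\Delta_{p_0+1,n}\le n^{-\gamma_0}\}\cap\{\Delta_{p_0+M-1,n}\le n^{-\gamma_0}\}\right)\to1.$$
   Context: Setting. $n=1,2,\ldots$ indexes a sequence of problems; for each $n$: an integer $p=p_n$, fixed integers $p_0,M$ (independent of $n$) with $1\le p_0\le M$, $p_0<p$; a continuous $f_n:[0,1]^p\to\mathbb{R}$; design points $\mathbf{x}_i=(x_{i1},\ldots,x_{ip})'$, $i=1,\ldots,n$, forming the rows of the $n\times p$ matrix $\mathbf{X}$. $Z_d=\{1,\ldots,d\}$, $\mathcal{A}_0=Z_{p_0}$; $\mathbf{x}_{\mathcal{A}}$, $\mathbf{X}_{\mathcal{A}}$ are the subvector/column-submatrix indexed by $\mathcal{A}\subset Z_p$. $a_n=O(n^\gamma)$ means $|a_n|\le cn^\gamma$ for a constant $c$ and large $n$. Discrepancy: for an $m\times d$ matrix $\mathbf{A}$ with rows $\mathbf{a}_i'\in[0,1]^d$, $\delta_{d,m}(\mathbf{A})=\sup_{\mathbf{x}\in[0,1]^d}|F_m(\mathbf{x})-\prod_kx_k|$, $F_m(\mathbf{x})=\frac1m\#\{i:a_{ik}\le x_k\ \forall k\}$. Sets: $\mathcal{U}_1=\{\mathcal{A}\subset Z_p:|\mathcal{A}|=M,\mathcal{A}_0\setminus\mathcal{A}\ne\emptyset\}$,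 $\mathcal{U}_2=\{\mathcal{A}\subset Z_p:|\mathcal{A}|=2\}$, $\mathcal{U}_3=\{\mathcal{A}_0\cup I_1:I_1\subset Z_p\setminus\mathcal{A}_0,|I_1|=1\}$, $\mathcal{U}_4=\{\mathcal{A}_0\cup I_2:I_2\subset Z_p\setminus\mathcal{A}_0,|I_2|=M-1\}$. $\Delta_{p_0,n}=\delta_{p_0,n}(\mathbf{X}_{\mathcal{A}_0})$, $\Delta_{2,n}=\max_{\mathcal{A}\in\mathcal{U}_2}\delta_{2,n}(\mathbf{X}_{\mathcal{A}})$, $\Delta_{p_0+1,n}=\max_{\mathcal{A}\in\mathcal{U}_3}\delta_{p_0+1,n}(\mathbf{X}_{\mathcal{A}})$, $\Delta_{p_0+M-1,n}=\max_{\mathcal{A}\in\mathcal{U}_4}\delta_{p_0+M-1,n}(\mathbf{X}_{\mathcal{A}})$. Also given for each $n$: $\widetilde f_n\in C[0,1]^{p_0}$ and $\eta_n>0$. Subset best linear approximation: $(\beta_0(\mathcal{A}),\boldsymbol\beta(\mathcal{A})')'$ minimizes $\int_{[0,1]^p}[f_n(\mathbf{x})-\phi_0-\boldsymbol\phi'\mathbf{x}_{\mathcal{A}}]^2d\mathbf{x}$; $\boldsymbol\beta_{Z_p}(\mathcal{A})\in\mathbb{R}^p$ equals $\boldsymbol\beta(\mathcal{A})$ on $\mathcal{A}$ and $0$ elsewhere. Hardy–Krause variation $V_{HK}$: for $g:[0,1]^d\to\mathbb{R}$, $V_{HK}(g)=\sum_{\emptyset\ne u\subset Z_d}V^{Vit}(g_u)$,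 where $g_u$ is $g$ with $x_k=1$ for $k\notin u$ and $V^{Vit}$ is the Vitali variation (supremum over finite partitions into axis-parallel sub-rectangles $J$ of $\sum|\Delta_J|$, $\Delta_J$ the alternating-sign vertex sum); functions of some coordinates of $\mathbf{x}\in[0,1]^p$ are regarded as functions on $[0,1]^p$. $C_{1n}=\max_{j\le p}\max(V_{HK}(\widetilde f_n),V_{HK}(x_j\widetilde f_n))$; $C_{2n}=\max_{\mathbf{x}}|f_n(\mathbf{x})|$; $C_{3n}=\max_{\mathbf{x}}|\widetilde f_n(\mathbf{x}_{\mathcal{A}_0})-\mathbf{x}'\boldsymbol\beta_{Z_p}(\mathcal{A}_0)-\beta_0(\mathcal{A}_0)|$; $C_{4n}=\max_{\mathcal{A}\in\mathcal{U}_1}\max_{\mathbf{x}}|\widetilde f_n(\mathbf{x}_{\mathcal{A}_0})-\mathbf{x}'\boldsymbol\beta_{Z_p}(\mathcal{A})-\beta_0(\mathcal{A})|$; $V_{1n}=V_{HK}(\widetilde f_n(\mathbf{x}_{\mathcal{A}_0})-\beta_0(\mathcal{A}_0)-\mathbf{x}'\boldsymbol\beta_{Z_p}(\mathcal{A}_0))$; $V_{2n}=\max_{\mathcal{A}\in\mathcal{U}_1}V_{HK}(\widetilde f_n(\mathbf{x}_{\mathcal{A}_0})-\beta_0(\mathcal{A})-\mathbf{x}'\boldsymbol\beta_{Z_p}(\mathcal{A}))$ (maxima over $\mathbf{x}\in[0,1]^p$). (A5): the entries $x_{ij}$ are i.i.d. uniform on $[0,1)$. (A6): $\eta_n=O(n^{-\gamma_1})$,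 $V_{1n}=O(n^{\gamma_2})$, $V_{2n}=O(n^{\gamma_3})$, $C_{1n}=O(n^{\gamma_4})$, $C_{2n}=O(n^{\gamma_5})$, $C_{3n}=O(n^{\gamma_6})$, $C_{4n}=O(n^{\gamma_7})$, $\log p=O(n^{\gamma_{10}})$, where $\gamma_1,\gamma_{10}>0$, $\gamma_{10}<1$, and with $\tilde\gamma_0=(1-\gamma_{10})/2$: $\gamma_2,\gamma_3,\gamma_4,\gamma_5<\tilde\gamma_0$, $\gamma_6,\gamma_7<\gamma_1$, $\gamma_4+\gamma_6<\tilde\gamma_0$, $\gamma_5+\gamma_6<\tilde\gamma_0$, $\gamma_4+\gamma_7<\tilde\gamma_0$, $\gamma_5+\gamma_7<\tilde\gamma_0$. *)

From HB Require Import structures.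
From mathcomp Require Import all_boot all_order all_algebra.
From mathcomp Require Import all_classical all_reals all_analysis.
Set Implicit Arguments. Unset Strict Implicit. Unset Printing Implicit Defensive.
Import Order.TTheory GRing.Theory Num.Theory.
Import numFieldNormedType.Exports.
Local Open Scope classical_set_scope.
Local Open Scope ring_scope.

Section Defs.
Variable R : realType.

Definition cube (d : nat) : set 'rV[R]_d :=
  [set x | forall k : 'I_d, 0 <= x ord0 k <= 1].

Definition disc (m d : nat) (A : 'M[R]_(m, d)) : R :=
  sup ((fun x : 'rV[R]_d => `| (#|[set i : 'I_m | [forall k, A i k <= x ord0 k]]|%:R / m%:R)
              - \prod_(k < d) x ord0 k |) @` @cube d).

(* column submatrix X_A (columns of A in increasing order) *)
Definition subm (n p : nat) (X : 'M[R]_(n, p)) (A : {set 'I_p}) : 'M[R]_(n, #|A|) :=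
  colsub (fun k : 'I_#|A| => enum_val k) X.

(* A_0 = Z_{p0} = {1,...,p0}, i.e. the first p0 coordinates *)
Definition A0 (p p0 : nat) : {set 'I_p} := [set k : 'I_p | (k < p0)%N].

Definition inU1 (p p0 M : nat) (A : {set 'I_p}) : bool :=
  (#|A| == M) && (A0 p p0 :\: A != finset.set0).
Definition inU2 (p : nat) (A : {set 'I_p}) : bool := #|A| == 2.
Definition inU3 (p p0 : nat) (A : {set 'I_p}) : bool :=
  [exists I1 : {set 'I_p},
     [&& I1 \subset ~: A0 p p0, #|I1| == 1 & A == A0 p p0 :|: I1]].
Definition inU4 (p p0 M : nat) (A : {set 'I_p}) : bool :=
  [exists I2 : {set 'I_p},
     [&& I2 \subset ~: A0 p p0, #|I2| == (M - 1)%N & A == A0 p p0 :|: I2]].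

(* the four maximal discrepancies (discrepancies are >= 0, so 0 is a neutral base) *)
Definition Delta_p0 (n p p0 : nat) (X : 'M[R]_(n, p)) : R := disc (subm X (A0 p p0)).
Definition Delta_2 (n p : nat) (X : 'M[R]_(n, p)) : R :=
  \big[Num.max/0]_(A : {set 'I_p} | inU2 A) disc (subm X A).
Definition Delta_p0_1 (n p p0 : nat) (X : 'M[R]_(n, p)) : R :=
  \big[Num.max/0]_(A : {set 'I_p} | inU3 p0 A) disc (subm X A).
Definition Delta_p0_M1 (n p p0 M : nat) (X : 'M[R]_(n, p)) : R :=
  \big[Num.max/0]_(A : {set 'I_p} | inU4 p0 M A) disc (subm X A).

Definition restr (d e : nat) (x : 'rV[R]_d) : 'rV[R]_e :=
  \row_(k < e) odflt 0 (omap (fun j : 'I_d => x ord0 j) (insub (val k))).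

(* iterated (Fubini) Lebesgue integral over [0,1]^d of g, which depends on coordinates 0..d-1 *)
Fixpoint iint (d : nat) (g : (nat -> R) -> R) : R :=
  match d with
  | 0 => g (fun _ => 0)
  | d'.+1 => Rintegral (@lebesgue_measure R) `[0, 1]
               (fun t => iint d' (fun y => g (fun i => if i == d' then t else y i)))
  end.

Definition L2err (d : nat) (f : 'rV[R]_d -> R) (phi0 : R) (phi : 'I_d -> R) : R :=
  iint d (fun y => (f (\row_(k < d) y k) - phi0 - \sum_(k < d) phi k * y k) ^+ 2).

(* (b0, b) is the best linear approximation of f using the variables in A;
   b is beta_{Z_p}(A), i.e. extended by 0 outside A *)
Definition bestlin (d : nat) (f : 'rV[R]_d -> R) (A : {set 'I_d}) (b0 : R) (b : 'I_d -> R) :=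
  (forall j, j \notin A -> b j = 0) /\
  forall (phi0 : R) (phi : 'I_d -> R), (forall j, j \notin A -> phi j = 0) ->
    L2err f b0 b <= L2err f phi0 phi.

Definition linpart (d : nat) (x : 'rV[R]_d) (b : 'I_d -> R) : R :=
  \sum_(j < d) x ord0 j * b j.

(* Vitali variation on the face {x_k = 1, k notin u}, computed over grid partitions
   with N cells per direction (degenerate cells allowed) *)
Definition grid (d N : nat) (t : 'I_d -> nat -> R) : Prop :=
  forall k, t k 0%N = 0 /\ t k N = 1 /\ forall i, (i < N)%N -> t k i <= t k i.+1.

Definition vit_sum (d : nat) (u : {set 'I_d}) (g : 'rV[R]_d -> R) (N : nat)
  (t : 'I_d -> nat -> R) : R :=
  \sum_(c : {ffun 'I_d -> 'I_N} | [forall k, (k \notin u) ==> (val (c k) == 0%N)])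
    `| \sum_(v : {set 'I_d} | v \subset u)
         (-1) ^+ #|u :\: v| *
         g (\row_(k < d) (if k \in u then (if k \in v then t k (c k).+1 else t k (c k))
                          else 1)) |.

Definition vitali (d : nat) (u : {set 'I_d}) (g : 'rV[R]_d -> R) : \bar R :=
  ereal_sup [set y : \bar R | exists N t, grid N t /\ y = (vit_sum u g N t)%:E].

Definition VHK (d : nat) (g : 'rV[R]_d -> R) : \bar R :=
  (\sum_(u : {set 'I_d} | u != finset.set0) vitali u g)%E.

(* a_n = O(n^g) for families of quantities indexed by n (uniformly in an index) *)
Definition bigO_unif (a : nat -> R -> Prop) (g : R) : Prop :=
  exists c : R, exists N : nat, forall n, (N <= n)%N ->
    forall r, a n r -> `|r| <= c * (n%:R `^ g).
Definition bigO_ebar (a : nat -> \bar R -> Prop) (g : R) : Prop :=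
  exists c : R, exists N : nat, forall n, (N <= n)%N ->
    forall r, a n r -> (`|r| <= (c * (n%:R `^ g))%:E)%E.

Definition A5 (dT : measure_display) (T : measurableType dT) (P : probability T R)
  (p : nat -> nat) (X : forall n, T -> 'M[R]_(n, p n)) : Prop :=
  forall n,
    (forall i j, measurable_fun setT (fun w => X n w i j)) /\
    (forall i j (B : set R), measurable B ->
       P [set w | B (X n w i j)] = (@lebesgue_measure R) (B `&` `[0, 1[)) /\
    (forall (J : {set 'I_n * 'I_(p n)}) (B : 'I_n * 'I_(p n) -> set R),
       (forall k, measurable (B k)) ->
       P [set w | forall k, k \in J -> B k (X n w k.1 k.2)] =
       (\prod_(k in J) P [set w | B k (X n w k.1 k.2)])%E).

Definition A6 (p : nat -> nat) (p0 M : nat)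
  (f : forall n, 'rV[R]_(p n) -> R) (ft : forall n, 'rV[R]_p0 -> R) (eta : nat -> R)
  (beta0 : forall n, {set 'I_(p n)} -> R) (beta : forall n, {set 'I_(p n)} -> 'I_(p n) -> R)
  (g1 g2 g3 g4 g5 g6 g7 g10 : R) : Prop :=
  let gt0 := (1 - g10) / 2 in
  let ftp n (x : 'rV[R]_(p n)) := ft n (restr p0 x) in
  let A0n n := A0 (p n) p0 in
  bigO_unif (fun n r => r = eta n) g1 /\
  bigO_ebar (fun n r => r = VHK (fun x => ftp n x - beta0 n (A0n n)
                                          - linpart x (beta n (A0n n)))) g2 /\
  bigO_ebar (fun n r => exists A, inU1 p0 M A /\
               r = VHK (fun x => ftp n x - beta0 n A - linpart x (beta n A))) g3 /\
  bigO_ebar (fun n r => r = VHK (ftp n) \/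
               exists j, r = VHK (fun x => x ord0 j * ftp n x)) g4 /\
  bigO_unif (fun n r => exists x, @cube (p n) x /\ r = f n x) g5 /\
  bigO_unif (fun n r => exists x, @cube (p n) x /\
               r = ftp n x - linpart x (beta n (A0n n)) - beta0 n (A0n n)) g6 /\
  bigO_unif (fun n r => exists A x, inU1 p0 M A /\ @cube (p n) x /\
               r = ftp n x - linpart x (beta n A) - beta0 n A) g7 /\
  bigO_unif (fun n r => r = ln (p n)%:R) g10 /\
  0 < g1 /\ 0 < g10 /\ g10 < 1 /\
  g2 < gt0 /\ g3 < gt0 /\ g4 < gt0 /\ g5 < gt0 /\ g6 < g1 /\ g7 < g1 /\
  g4 + g6 < gt0 /\ g5 + g6 < gt0 /\ g4 + g7 < gt0 /\ g5 + g7 < gt0.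

End Defs.
Arguments cube {R} d _.

From HB Require Import structures.
From mathcomp Require Import all_boot all_order all_algebra.
From mathcomp Require Import all_classical all_reals all_analysis.
From mathcomp Require Import lra ring.
Import Order.TTheory GRing.Theory Num.Theory.
Import numFieldNormedType.Exports.
Set Implicit Arguments. Unset Strict Implicit. Unset Printing Implicit Defensive.
Local Open Scope classical_set_scope.
Local Open Scope ring_scope.

(* Fix a set A of columns and a point y of the cube.  Under (A5) the rows of
   X_A lying below y are independent events of probability vol y, so by
   Chernoff's bound the local discrepancy at y exceeds tau with probability at
   most 2 exp(-n tau^2/8).  The discrepancy of X_A exceeds the maximum of the
   local discrepancies over the grid of mesh 1/n by at most |A|/n, and every
   column set involved has at most p0 + M elements.  A union bound over at most
   (p+1)^(p0+M) sets and (n+1)^(p0+M) grid points, with tau = n^-g0/2, bounds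
   the failure probability by exp(O(log p + log n) - n^(1-2 g0)/32), which
   tends to 0 since log p = O(n^g10) and g10 < 1 - 2 g0. *)

Section FiniteMeasurability.
Context (d : measure_display) (T : measurableType d).

Lemma measurable_forall (I : finType) (Q : pred I) (S : I -> set T) :
  (forall i, measurable (S i)) -> measurable [set w | forall i, Q i -> S i w].
Proof. by move=> mS; apply: fin_bigcap_measurable => // i _; exact: mS. Qed.

Lemma measurable_exists (I : finType) (Q : pred I) (S : I -> set T) :
  (forall i, measurable (S i)) -> measurable [set w | exists i, Q i /\ S i w].
Proof.
move=> mS; rewrite (_ : [set w | _] = \bigcup_(i in [set i | Q i]) S i).
  by apply: fin_bigcup_measurable => // i _; exact: mS.
by apply/seteqP; split=> w /= [i [Qi Si]]; exists i.
Qed.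

Lemma measurable_forallb (I : finType) (b : I -> T -> bool) :
  (forall i, measurable [set w | b i w]) -> measurable [set w | [forall i, b i w]].
Proof.
move=> mb; rewrite (_ : [set w | _] = [set w | forall i, true -> b i w]).
  exact: measurable_forall.
by apply/seteqP; split=> w /= H; [move=> i _; exact: (forallP H) | apply/forallP=> i; exact: H].
Qed.

Lemma measurable_fun_le (R : realType) (f : T -> R) c :
  measurable_fun setT f -> measurable [set w | f w <= c].
Proof.
move=> mf; have := mf measurableT _ (measurable_itv `]-oo, c]); rewrite setTI.
by congr measurable; apply/seteqP; split=> w /=; rewrite in_itv.
Qed.

End FiniteMeasurability.

Section FiniteProbability.
Context (R : realType) (d : measure_display) (T : measurableType d).
Variable P : probability T R.

Definition pr (A : set T) : R := fine (P A).

Lemma prE A : measurable A -> P A = (pr A)%:E.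
Proof. by move=> mA; rewrite /pr fineK // fin_num_measure. Qed.

Lemma pr_ge0 A : 0 <= pr A.
Proof. by rewrite /pr fine_ge0 // measure_ge0. Qed.

Lemma pr_le1 A : measurable A -> pr A <= 1.
Proof. by move=> mA; rewrite -lee_fin -prE // probability_le1. Qed.

Lemma le_pr A B : measurable A -> measurable B -> A `<=` B -> pr A <= pr B.
Proof. by move=> mA mB AB; rewrite -lee_fin -!prE //; apply: le_measure; rewrite ?inE. Qed.

Lemma pr_setC A : measurable A -> pr (~` A) = 1 - pr A.
Proof.
by move=> mA; apply: EFin_inj; rewrite -prE ?probability_setC ?prE //; exact: measurableC.
Qed.

Lemma pr_setU_le A B : measurable A -> measurable B -> pr (A `|` B) <= pr A + pr B.
Proof.
move=> mA mB; rewrite -lee_fin EFinD -!prE //; last exact: measurableU.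
exact: measureU2.
Qed.

Lemma pr_exists_le (I : finType) (Q : pred I) (E : I -> set T) :
  (forall i, measurable (E i)) ->
  pr [set w | exists i, Q i /\ E i w] <= \sum_(i | Q i) pr (E i).
Proof.
move=> mE.
have seq_bound s : pr [set w | exists i, i \in s /\ E i w] <= \sum_(i <- s) pr (E i).
  elim: s => [|a s IH].
    rewrite big_nil (_ : [set w | _] = set0); first by rewrite /pr measure0.
    by apply/seteqP; split=> w //= [i []].
  rewrite big_cons (_ : [set w | _] = E a `|` [set w | exists i, i \in s /\ E i w]).
    apply: le_trans (pr_setU_le _ _) (lerD (lexx _) IH) => //.
    exact: (measurable_exists (fun i => i \in s)).
  apply/seteqP; split=> w /=.
    by move=> [i []]; rewrite inE => /orP[/eqP-> | iS Ei]; [left | right; exists i].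
  by case=> [Ea | [i [iS Ei]]]; [exists a; rewrite mem_head | exists i; rewrite inE iS orbT].
rewrite -big_filter (_ : [set w | _] =
    [set w | exists i, i \in [seq i <- index_enum I | Q i] /\ E i w]); first exact: seq_bound.
by apply/seteqP; split=> w /= [i [Qi Ei]]; exists i;
  rewrite ?mem_filter ?mem_index_enum ?andbT in Qi *.
Qed.

End FiniteProbability.

Section FiniteRandomVariable.
Context (R : realType) (d : measure_display) (T : measurableType d).
Variables (P : probability T R) (I : finType) (Z : T -> I).
Hypothesis measurable_fiber : forall K, measurable [set w | Z w = K].

Lemma measurable_preimage (Q : pred I) : measurable [set w | Q (Z w)].
Proof.
rewrite (_ : [set w | _] = [set w | exists K, Q K /\ Z w = K]).
  exact: measurable_exists.
by apply/seteqP; split=> w /=; [exists (Z w) | case=> K [QK ->]].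
Qed.

Lemma pr_preimage (Q : pred I) :
  pr P [set w | Q (Z w)] = \sum_(K | Q K) pr P [set w | Z w = K].
Proof.
have seq_sum s : uniq s -> pr P [set w | Z w \in s] = \sum_(K <- s) pr P [set w | Z w = K].
  elim: s => [_ | a s IH /= /andP[aS us]].
    by rewrite big_nil (_ : [set w | _] = set0) ?/pr ?measure0 //; apply/seteqP; split.
  rewrite big_cons -IH // (_ : [set w | _] = [set w | Z w = a] `|` [set w | Z w \in s]).
    have ms := measurable_preimage (fun K => K \in s).
    apply: EFin_inj; rewrite EFinD -!prE ?measureU //; last exact: measurableU.
    by apply/seteqP; split=> w // [/= -> aS']; rewrite aS' in aS.
  apply/seteqP; split=> w /=; rewrite inE; first by case/orP=> [/eqP|]; [left | right].
  by case=> [->|->]; rewrite ?eqxx ?orbT.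
rewrite -big_filter -seq_sum ?filter_uniq ?index_enum_uniq //.
by congr pr; apply/seteqP; split=> w /=; rewrite mem_filter mem_index_enum andbT.
Qed.

End FiniteRandomVariable.

Lemma sum_subset_exp (R : comNzRingType) (I : finType) (K : {set I}) (a : R) :
  \sum_(J : {set I} | J \subset K) a ^+ #|J| = (1 + a) ^+ #|K|.
Proof.
have := bigA_distr 1 (@GRing.add R) (fun i => if i \in K then a else 0) (fun _ => 1).
have -> : \prod_i ((if i \in K then a else 0) + 1) = \prod_(i in K) (1 + a).
  by rewrite [RHS]big_mkcond; apply: eq_bigr => i _; case: ifP; rewrite ?add0r // addrC.
rewrite prodr_const => ->; rewrite [LHS]big_mkcond /=; apply: eq_bigr => J _.
case: ifP => [JK | /negbT/subsetPn[i iJ iK]].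
  rewrite -prodr_const [LHS]big_mkcond; apply: eq_bigr => i _.
  by case: ifP => // iJ; rewrite (fintype.subsetP JK _ iJ).
by rewrite (bigD1 i) //= iJ (negbTE iK) mul0r.
Qed.

Lemma expR_le_quadratic (R : realType) (s : R) : s <= 1 / 2 -> expR s <= 1 + s + 2 * s ^+ 2.
Proof.
move=> s_le.
have e_gt0 := expR_gt0 s.
have e_inv : expR s * expR (- s) = 1 by rewrite -expRD subrr expR0.
have := expR_ge1Dx (- s).
have : 0 <= s ^+ 2 * (1 - 2 * s) by apply: mulr_ge0; [exact: sqr_ge0 | lra].
nra.
Qed.

Section BinomialTails.
Context (R : realType) (d : measure_display) (T : measurableType d).
Variables (P : probability T R) (n : nat) (hit : 'I_n -> T -> bool) (q : R).
Hypothesis measurable_hit : forall i, measurable [set w | hit i w].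
Hypotheses (q_ge0 : 0 <= q) (q_le1 : q <= 1).
Let hits w : {set 'I_n} := [set i | hit i w].
(* i.e. the events [hit i] are independent, each of probability [q] *)
Hypothesis pr_subset_hits : forall J : {set 'I_n}, pr P [set w | J \subset hits w] = q ^+ #|J|.

Lemma measurable_hits_eq K : measurable [set w | hits w = K].
Proof.
rewrite (_ : [set w | _] = [set w | [forall i, hit i w == (i \in K)]]).
  apply: measurable_forallb => i; case: (i \in K).
    by rewrite (_ : [set w | _] = [set w | hit i w]) //; apply/seteqP; split=> w /=; rewrite eqb_id.
  rewrite (_ : [set w | _] = ~` [set w | hit i w]); first exact: measurableC.
  by apply/seteqP; split=> w /=; rewrite eqbF_neg => /negP.
apply/seteqP; split=> w /=; first by move=> <-; apply/forallP=> i; rewrite inE.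
by move/forallP=> H; apply/setP=> i; rewrite inE; apply/eqP.
Qed.

Let pi K := pr P [set w | hits w = K].

Lemma sum_pr_hits_exp (z : R) : \sum_K pi K * z ^+ #|K| = (1 + (z - 1) * q) ^+ n.
Proof.
transitivity (\sum_(K : {set 'I_n}) \sum_(J : {set 'I_n} | J \subset K) pi K * (z - 1) ^+ #|J|).
  by apply: eq_bigr => K _; rewrite -mulr_sumr sum_subset_exp addrC subrK.
rewrite (exchange_big_dep xpredT) //=.
transitivity (\sum_(J : {set 'I_n}) ((z - 1) * q) ^+ #|J|).
  apply: eq_bigr => J _; rewrite -mulr_suml exprMn mulrC -pr_subset_hits.
  by rewrite (pr_preimage P measurable_hits_eq (fun K => J \subset K)).
have := sum_subset_exp [set: 'I_n] ((z - 1) * q); rewrite cardsT card_ord => <-.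
by apply: eq_bigl => J; rewrite finset.subsetT.
Qed.

Lemma pr_card_hits_tail (s th : R) : s <= 1 / 2 ->
  pr P [set w | th <= s * #|hits w|%:R] <= expR (n%:R * q * (s + 2 * s ^+ 2) - th).
Proof.
move=> s_le; rewrite (pr_preimage P measurable_hits_eq (fun K => th <= s * #|K|%:R)).
apply: (@le_trans _ _ (\sum_K pi K * (expR (- th) * expR s ^+ #|K|))).
  rewrite [leLHS]big_mkcond /=; apply: ler_sum => K _; case: ifP => thK.
    rewrite -[leLHS]mulr1 ler_wpM2l ?pr_ge0 // -expRM_natl -expRD -[leLHS]expR0 ler_expR.
    by move: thK; rewrite mulrC; lra.
  by apply: mulr_ge0; [exact: pr_ge0 | rewrite mulr_ge0 ?expR_ge0 ?exprn_ge0 ?expR_ge0].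
rewrite (eq_bigr (fun K => expR (- th) * (pi K * expR s ^+ #|K|))); last first.
  by move=> K _; rewrite mulrCA.
rewrite -mulr_sumr sum_pr_hits_exp expRD mulrC ler_wpM2r ?expR_ge0 //.
have base_ge0 : 0 <= 1 + (expR s - 1) * q.
  by rewrite mulrBl mul1r addrCA addr_ge0 ?subr_ge0 // mulr_ge0 ?expR_ge0.
rewrite -mulrA expRM_natl; apply: lerXn2r; rewrite ?nnegrE ?expR_ge0 //.
apply: le_trans (expR_ge1Dx _); rewrite lerD2l mulrC ler_wpM2l //.
by have := expR_le_quadratic s_le; lra.
Qed.

Lemma pr_card_hits_dev (t : R) : (0 < n)%N -> 0 <= t <= 2 ->
  pr P [set w | t < `|#|hits w|%:R / n%:R - q|] <= 2 * expR (- (n%:R * t ^+ 2 / 8)).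
Proof.
move=> n_gt0 /andP[t_ge0 t_le2].
have n_pos : (0 : R) < n%:R by rewrite ltr0n.
pose th s := s * n%:R * q + n%:R * t ^+ 2 / 4.
pose tail s := [set w | th s <= s * #|hits w|%:R].
have measurable_tail s : measurable (tail s).
  exact: (measurable_preimage measurable_hits_eq (fun K => th s <= s * #|K|%:R)).
(* Chernoff's bound for the upper tail ([s = t/4]) and the lower tail ([s = - t/4]) *)
have pr_tail s : s ^+ 2 = (t / 4) ^+ 2 -> s <= 1 / 2 ->
    pr P (tail s) <= expR (- (n%:R * t ^+ 2 / 8)).
  move=> s2 s_le; apply: le_trans (pr_card_hits_tail _ s_le) _.
  have := ler_wpM2r (sqr_ge0 t) (ler_wpM2l (ltW n_pos) q_le1).
  by rewrite ler_expR /th s2 mulr1; nra.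
apply: (@le_trans _ _ (pr P (tail (t / 4) `|` tail (- (t / 4))))).
  apply: le_pr; [|exact: measurableU|].
    exact: (measurable_preimage measurable_hits_eq (fun K => t < `|#|K|%:R / n%:R - q|)).
  move=> w /=; rewrite /tail /th /=; set u := #|hits w|%:R / n%:R.
  have -> : #|hits w|%:R = u * n%:R by rewrite /u mulfVK // gt_eqF.
  have tn := mulr_ge0 t_ge0 (ltW n_pos).
  by rewrite ltr_normr => /orP[h|h]; [left | right]; nra.
have := pr_setU_le P (measurable_tail (t / 4)) (measurable_tail (- (t / 4))).
have := pr_tail (t / 4) erefl ltac:(lra).
have := pr_tail (- (t / 4)) (sqrrN _) ltac:(lra).
lra.
Qed.

End BinomialTails.

Section LocalDiscrepancy.
Variable R : realType.

Definition below m d (B : 'M[R]_(m, d)) (x : 'rV[R]_d) : {set 'I_m} :=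
  [set i | [forall k, B i k <= x ord0 k]].

Definition vol d (x : 'rV[R]_d) : R := \prod_(k < d) x ord0 k.

Definition local_disc m d (B : 'M[R]_(m, d)) (x : 'rV[R]_d) : R :=
  `| #|below B x|%:R / m%:R - vol x |.

Lemma discE m d (B : 'M[R]_(m, d)) : disc B = sup (local_disc B @` cube d).
Proof.
rewrite /disc /local_disc; congr (sup (image _ _)); apply: funext => x.
by congr (`| _%:R / _ - _ |); apply: eq_card => i; apply/idP/idP; rewrite in_setE inE.
Qed.

Lemma vol_ge0 d (x : 'rV[R]_d) : cube d x -> 0 <= vol x.
Proof. by move=> cx; apply: prodr_ge0 => k _; have /andP[] := cx k. Qed.

Lemma vol_le1 d (x : 'rV[R]_d) : cube d x -> vol x <= 1.
Proof. by move=> cx; apply: prodr_ile1 => k _; exact: cx. Qed.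

Lemma frac_below_ge0 m d (B : 'M[R]_(m, d)) x : 0 <= #|below B x|%:R / m%:R :> R.
Proof. by rewrite divr_ge0 ?ler0n. Qed.

Lemma frac_below_le1 m d (B : 'M[R]_(m, d)) x : #|below B x|%:R / m%:R <= 1 :> R.
Proof.
case: m B => [|m] B; first by rewrite invr0 mulr0.
by rewrite ler_pdivrMr ?ltr0n // mul1r ler_nat -[X in (_ <= X)%N]card_ord max_card.
Qed.

Lemma cube0 d : cube d (0 : 'rV[R]_d).
Proof. by move=> k; rewrite mxE lexx ler01. Qed.

Lemma has_sup_local_disc m d (B : 'M[R]_(m, d)) : has_sup (local_disc B @` cube d).
Proof.
split; first by exists (local_disc B 0), 0; [exact: cube0 |].
exists 2 => _ [x cx <-]; rewrite /local_disc ler_norml.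
have := frac_below_ge0 B x; have := frac_below_le1 B x.
have := vol_ge0 cx; have := vol_le1 cx; lra.
Qed.

Lemma local_disc_le_disc m d (B : 'M[R]_(m, d)) x : cube d x -> local_disc B x <= disc B.
Proof.
by move=> cx; rewrite discE; apply: sup_upper_bound; [exact: has_sup_local_disc | exists x].
Qed.

Lemma disc_le m d (B : 'M[R]_(m, d)) t :
  (forall x, cube d x -> local_disc B x <= t) -> disc B <= t.
Proof.
move=> H; rewrite discE; apply: ge_sup; first by exists (local_disc B 0), 0; [exact: cube0 |].
by move=> _ [x cx <-]; exact: H.
Qed.

Lemma card_below_le m d (B : 'M[R]_(m, d)) (x y : 'rV[R]_d) :
  (forall k, x ord0 k <= y ord0 k) -> (#|below B x| <= #|below B y|)%N.
Proof.
move=> xy; apply/subset_leq_card/fintype.subsetP => i; rewrite !inE => /forallP Bx.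
by apply/forallP => k; exact: le_trans (Bx k) (xy k).
Qed.

Lemma vol_le d (x y : 'rV[R]_d) : (forall k, 0 <= x ord0 k <= y ord0 k) -> vol x <= vol y.
Proof. by move=> xy; apply: ler_prod => k _; exact: xy. Qed.

Lemma prod_sub_le_sum d (a b : 'I_d -> R) :
  (forall k, 0 <= a k <= b k) -> (forall k, b k <= 1) ->
  \prod_k b k - \prod_k a k <= \sum_k (b k - a k).
Proof.
elim: d a b => [|d IH] a b ab b_le1; first by rewrite !big_ord0 subrr.
have a_ge0 k : 0 <= a k by case/andP: (ab k).
have a_le k : a k <= b k by case/andP: (ab k).
rewrite !big_ord_recl; set A := \prod_(i < d) a _; set B := \prod_(i < d) b _.
have A_ge0 : 0 <= A by apply: prodr_ge0 => k _.
have A_le : A <= B by apply: ler_prod => k _; rewrite a_ge0 a_le.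
have B_le1 : B <= 1 by apply: prodr_ile1 => k _; rewrite b_le1 (le_trans (a_ge0 _) (a_le _)).
have := IH _ _ (fun k => ab (lift ord0 k)) (fun k => b_le1 (lift ord0 k)); rewrite -/A -/B.
have := a_ge0 ord0; have := a_le ord0; have := b_le1 ord0.
nra.
Qed.

Lemma frac_below_le m d (B : 'M[R]_(m, d)) (x y : 'rV[R]_d) :
  (forall k, x ord0 k <= y ord0 k) -> #|below B x|%:R / m%:R <= #|below B y|%:R / m%:R :> R.
Proof. by move=> xy; rewrite ler_wpM2r ?invr_ge0 ?ler0n // ler_nat card_below_le. Qed.

Lemma local_disc_sandwich m d (B : 'M[R]_(m, d)) (lo x hi : 'rV[R]_d) t :
  (forall k, 0 <= lo ord0 k <= x ord0 k) -> (forall k, x ord0 k <= hi ord0 k) ->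
  local_disc B lo <= t -> local_disc B hi <= t -> local_disc B x <= t + (vol hi - vol lo).
Proof.
move=> lo_x x_hi; rewrite /local_disc !ler_norml => /andP[? ?] /andP[? ?].
have := frac_below_le B (fun k => (andP (lo_x k)).2); have := frac_below_le B x_hi.
have := vol_le lo_x; have : vol x <= vol hi.
  by apply: vol_le => k; rewrite x_hi andbT; case/andP: (lo_x k); exact: le_trans.
by move=> *; apply/andP; split; lra.
Qed.

Definition grid_pt d N (h : {ffun 'I_d -> 'I_N.+1}) : 'rV[R]_d := \row_k ((h k)%:R / N%:R).

Lemma grid_pt_cube d N (h : {ffun 'I_d -> 'I_N.+1}) : (0 < N)%N -> cube d (grid_pt h).
Proof.
move=> N_gt0 k; rewrite mxE divr_ge0 ?ler0n //=.
by rewrite ler_pdivrMr ?ltr0n // mul1r ler_nat -ltnS.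
Qed.

Lemma grid_neighbours d N (x : 'rV[R]_d) : (0 < N)%N -> cube d x ->
  exists lo hi : {ffun 'I_d -> 'I_N.+1}, forall k,
    [/\ 0 <= grid_pt lo ord0 k <= x ord0 k, x ord0 k <= grid_pt hi ord0 k,
        grid_pt hi ord0 k <= 1 & grid_pt hi ord0 k - grid_pt lo ord0 k <= N%:R^-1].
Proof.
move=> N_gt0 cx; have N_pos : (0 : R) < N%:R by rewrite ltr0n.
pose l k := Num.truncn (N%:R * x ord0 k).
have Nx_ge0 k : 0 <= N%:R * x ord0 k by case/andP: (cx k) => ? _; rewrite mulr_ge0 ?ler0n.
have l_lt k : (l k < N.+1)%N.
  rewrite ltnS truncn_le_nat; case/andP: (cx k) => _ x_le1.
  have : N%:R * x ord0 k <= N%:R by rewrite -[leRHS]mulr1 ler_wpM2l ?ler0n.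
  by rewrite -natr1; lra.
have h_lt k : (minn (l k).+1 N < N.+1)%N by rewrite ltnS geq_minr.
exists [ffun k => Ordinal (l_lt k)], [ffun k => Ordinal (h_lt k)] => k.
set h := minn (l k).+1 N.
have l_le : (l k)%:R <= N%:R * x ord0 k by rewrite truncn_le Nx_ge0.
have Nx_le : N%:R * x ord0 k <= h%:R.
  rewrite /h; case: leqP => [_ | /ltnW]; first exact/ltW/truncnS_gt.
  by case/andP: (cx k) => _ x_le1; rewrite -[leRHS]mulr1 ler_wpM2l ?ler0n.
have h_le : h%:R <= N%:R :> R by rewrite ler_nat geq_minr.
have h_l : h%:R <= (l k)%:R + 1 :> R by rewrite natr1 ler_nat geq_minl.
rewrite !mxE !ffunE /= -/h divr_ge0 ?ler0n //=; split.
- by rewrite ler_pdivrMr // mulrC.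
- by rewrite ler_pdivlMr // mulrC.
- by rewrite ler_pdivrMr // mul1r.
- by rewrite -mulrBl -[leRHS]mul1r ler_pM2r ?invr_gt0 //; lra.
Qed.

Lemma disc_le_grid m d N (B : 'M[R]_(m, d)) t : (0 < N)%N ->
  (forall h : {ffun 'I_d -> 'I_N.+1}, local_disc B (grid_pt h) <= t) ->
  disc B <= t + d%:R / N%:R.
Proof.
move=> N_gt0 grid_le; apply: disc_le => x cx.
have [lo [hi nb]] := grid_neighbours N_gt0 cx.
have lo_x k : 0 <= grid_pt lo ord0 k <= x ord0 k by case: (nb k).
have x_hi k : x ord0 k <= grid_pt hi ord0 k by case: (nb k).
apply: le_trans (local_disc_sandwich lo_x x_hi (grid_le lo) (grid_le hi)) _.
rewrite lerD2l; apply: le_trans (prod_sub_le_sum _ _) _.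
- by move=> k; case/andP: (lo_x k) => lo_ge0 lo_le; rewrite lo_ge0 (le_trans lo_le (x_hi k)).
- by move=> k; case: (nb k).
apply: (@le_trans _ _ (\sum_(k < d) N%:R^-1)); first by apply: ler_sum => k _; case: (nb k).
by rewrite sumr_const card_ord mulr_natl.
Qed.

End LocalDiscrepancy.

Arguments grid_pt {R d N}.
Arguments grid_pt_cube {R d N}.

Lemma le_of_le_addSinv (R : archiFieldType) (a b c : R) :
  (forall N : nat, a <= b + c / N.+1%:R) -> a <= b.
Proof.
move=> le_ab; apply/ler_addgt0Pr => e e_gt0.
apply: le_trans (le_ab (Num.truncn (c / e))) _; rewrite lerD2l ler_pdivrMr ?ltr0n //.
by have := truncnS_gt (c / e); rewrite ltr_pdivrMr // mulrC => /ltW.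
Qed.

Section RandomMatrix.
Context (R : realType) (d : measure_display) (T : measurableType d).
Variables (m k : nat) (B : T -> 'M[R]_(m, k)).
Hypothesis measurable_entry : forall i j, measurable_fun setT (fun w => B w i j).

Lemma measurable_row_below (y : 'rV[R]_k) i :
  measurable [set w | [forall j, B w i j <= y ord0 j]].
Proof. by apply: measurable_forallb => j; exact: measurable_fun_le. Qed.

Lemma measurable_local_disc_le y t : measurable [set w | local_disc (B w) y <= t].
Proof.
exact: (measurable_preimage (measurable_hits_eq (measurable_row_below y))
          (fun K => `| #|K|%:R / m%:R - vol y | <= t)).
Qed.

Lemma measurable_local_disc_gt y t : measurable [set w | t < local_disc (B w) y].
Proof.
rewrite (_ : [set w | _] = ~` [set w | local_disc (B w) y <= t]).
  exact/measurableC/measurable_local_disc_le.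
by apply/seteqP; split=> w /=; rewrite ltNge => /negP.
Qed.

Lemma measurable_disc_le t : measurable [set w | disc (B w) <= t].
Proof.
(* [disc_le_grid] trades the supremum over the cube for countably many grid events *)
pose grid_event N (h : {ffun 'I_k -> 'I_N.+2}) :=
  [set w | local_disc (B w) (grid_pt h) <= t + k%:R / N.+1%:R].
rewrite (_ : [set w | _] = \bigcap_N \bigcap_(h in setT) grid_event N h).
  apply: bigcapT_measurable => N; apply: fin_bigcap_measurable => // h _.
  exact: measurable_local_disc_le.
apply/seteqP; split=> w /=.
  move=> disc_le_t N _ h _.
  apply: le_trans (local_disc_le_disc (B w) (grid_pt_cube h (ltn0Sn N))) _.
  by apply: le_trans disc_le_t _; rewrite lerDl divr_ge0 ?ler0n.
move=> grid_le; apply: (@le_of_le_addSinv _ _ _ (k%:R *+ 2)) => N.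
have := disc_le_grid (ltn0Sn N) (fun h => grid_le N I h I).
by rewrite -addrA -mulrDl -mulr2n.
Qed.

End RandomMatrix.

Lemma lebesgue_measure_Iic_co01 (R : realType) (y : R) : 0 <= y <= 1 ->
  (@lebesgue_measure R) ([set` `]-oo, y]] `&` `[0, 1[) = y%:E.
Proof.
move=> /andP[y_ge0 y_le1]; have [->|y_neq1] := eqVneq y 1.
  rewrite (_ : _ `&` _ = [set` `[0, 1[]).
    by rewrite lebesgue_measure_itv /= lte_fin ltr01 /= oppr0 adde0.
  apply/seteqP; split=> x /=; rewrite !in_itv /=; first by case.
  by move=> /[dup] /andP[_ /ltW ->].
have y_lt1 : y < 1 by rewrite lt_neqAle y_neq1.
rewrite (_ : _ `&` _ = [set` `[0, y]]).
  rewrite lebesgue_measure_itv /= lte_fin; case: ltP => [_|]; first by rewrite oppr0 adde0.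
  by move=> y_le0; rewrite (@le_anti _ _ y 0) ?y_ge0 ?y_le0.
apply/seteqP; split=> x /=; rewrite !in_itv /=; first by case=> -> /andP[->].
by move=> /andP[-> x_le]; rewrite x_le (le_lt_trans x_le y_lt1).
Qed.

Section UniformDesign.
Context (R : realType) (d : measure_display) (T : measurableType d).
Variables (P : probability T R) (p : nat -> nat) (X : forall n, T -> 'M[R]_(n, p n)).
Hypothesis HA5 : A5 P X.

Lemma measurable_subm_entry n (A : {set 'I_(p n)}) i k :
  measurable_fun setT (fun w => subm (X n w) A i k).
Proof. by have [mX _] := HA5 n; rewrite /subm; under eq_fun do rewrite mxE; exact: mX. Qed.

Lemma pr_subset_below n (A : {set 'I_(p n)}) (y : 'rV[R]_#|A|) (J : {set 'I_n}) :
  cube _ y -> pr P [set w | J \subset below (subm (X n w) A) y] = vol y ^+ #|J|.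
Proof.
move=> cy.
(* [Y] extends [y] from the columns of [X_A] to all columns of [X], by [0] off [A]. *)
pose Y (j : 'I_(p n)) := \sum_(k | enum_val k == j) y ord0 k.
have YE k : Y (enum_val k) = y ord0 k.
  by rewrite /Y (big_pred1 k) // => k'; exact: (inj_eq enum_val_inj).
have YA j (jA : j \in A) : Y j = y ord0 (enum_rank_in jA j).
  by rewrite -{1}(enum_rankK_in jA jA) YE.
have [_ [pr_entry pr_indep]] := HA5 n.
pose halfline (ij : 'I_n * 'I_(p n)) : set R := [set` `]-oo, Y ij.2]].
have -> : [set w | J \subset below (subm (X n w) A) y] =
    [set w | forall ij, ij \in finset.setX J A -> halfline ij (X n w ij.1 ij.2)].
  apply/seteqP; split=> w /=.
    move=> /fintype.subsetP JB [i j]; rewrite finset.in_setX /= => /andP[iJ jA].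
    move: (JB i iJ); rewrite inE => /forallP /(_ (enum_rank_in jA j)).
    by rewrite /subm mxE enum_rankK_in // /halfline /= in_itv /= YA.
  move=> H; apply/fintype.subsetP => i iJ; rewrite inE; apply/forallP => k.
  have := H (i, enum_val k); rewrite finset.in_setX iJ enum_valP /= => /(_ isT).
  by rewrite /halfline /= in_itv /= YE /subm mxE.
rewrite /pr pr_indep => [|ij]; last exact: measurable_itv.
rewrite (eq_bigr (fun ij => (Y ij.2)%:E)); last first.
  move=> [i j]; rewrite finset.in_setX /= => /andP[_ jA].
  by rewrite pr_entry ?lebesgue_measure_Iic_co01 ?YA //; exact: measurable_itv.
rewrite prodEFin /= (eq_bigl (fun ij => (ij.1 \in J) && (ij.2 \in A))); last first.
  by move=> [i j]; rewrite finset.in_setX.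
rewrite -(pair_big_dep (fun i => i \in J) (fun i j => j \in A) (fun i j => Y j)) /=.
rewrite (eq_bigr (fun i => vol y)) ?prodr_const // => i _.
by rewrite big_enum_val /vol; apply: eq_bigr => k _; rewrite YE.
Qed.

Lemma pr_local_disc_gt n (A : {set 'I_(p n)}) (y : 'rV[R]_#|A|) t :
  (0 < n)%N -> cube _ y -> 0 <= t <= 2 ->
  pr P [set w | t < local_disc (subm (X n w) A) y] <= 2 * expR (- (n%:R * t ^+ 2 / 8)).
Proof.
move=> n_gt0 cy t02.
exact: (pr_card_hits_dev (measurable_row_below (@measurable_subm_entry n A) y)
          (vol_ge0 cy) (vol_le1 cy) (fun J => pr_subset_below J cy) n_gt0 t02).
Qed.

Definition grid_exceed n (A : {set 'I_(p n)}) t :=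
  [set w | exists h : {ffun 'I_#|A| -> 'I_n.+1}, t < local_disc (subm (X n w) A) (grid_pt h)].

Lemma measurable_grid_exceed n (A : {set 'I_(p n)}) t : measurable (grid_exceed A t).
Proof.
rewrite (_ : grid_exceed A t = [set w | exists h : {ffun 'I_#|A| -> 'I_n.+1}, true /\
    [set w | t < local_disc (subm (X n w) A) (grid_pt h)] w]).
  by apply: measurable_exists => h; exact/measurable_local_disc_gt/measurable_subm_entry.
by apply/seteqP; split=> w [h]; [exists h | case=> _; exists h].
Qed.

Lemma pr_grid_exceed_le n (A : {set 'I_(p n)}) t : (0 < n)%N -> 0 <= t <= 2 ->
  pr P (grid_exceed A t) <= (n.+1 ^ #|A|)%:R * (2 * expR (- (n%:R * t ^+ 2 / 8))).
Proof.
move=> n_gt0 t02; rewrite (_ : grid_exceed A t =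
    [set w | exists h : {ffun 'I_#|A| -> 'I_n.+1}, true /\
      [set w | t < local_disc (subm (X n w) A) (grid_pt h)] w]); last first.
  by apply/seteqP; split=> w [h]; [exists h | case=> _; exists h].
apply: (le_trans (pr_exists_le P _ (fun h =>
  measurable_local_disc_gt (@measurable_subm_entry n A) (grid_pt h) t))).
apply: (@le_trans _ _ (\sum_(h : {ffun 'I_#|A| -> 'I_n.+1}) 2 * expR (- (n%:R * t ^+ 2 / 8)))).
  by apply: ler_sum => h _; exact: (pr_local_disc_gt n_gt0 (grid_pt_cube h n_gt0) t02).
by rewrite sumr_const card_ffun !card_ord -[_ *+ _]mulr_natl.
Qed.

End UniformDesign.

Lemma card_small_sets (I : finType) (K : nat) :
  (#|[set A : {set I} | (#|A| <= K)%N]%SET| <= #|I|.+1 ^ K)%N.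
Proof.
pose of_fun (h : {ffun 'I_K -> option I}) : {set I} := [set x | Some x \in codom h]%SET.
have small_sub :
    [set A : {set I} | (#|A| <= K)%N]%SET \subset of_fun @: [set: {ffun 'I_K -> option I}]%SET.
  apply/fintype.subsetP => A; rewrite inE => A_small.
  apply/imsetP; exists [ffun j : 'I_K => nth None [seq Some x | x <- enum A] j] => //.
  apply/setP => x; rewrite inE; apply/idP/idP => [xA | /codomP[j]].
    have ix : (index x (enum A) < K)%N.
      by apply: leq_trans A_small; rewrite cardE index_mem mem_enum.
    apply/codomP; exists (Ordinal ix); rewrite ffunE /=.
    by rewrite (nth_map x) ?nth_index ?index_mem ?mem_enum.
  rewrite ffunE; case: (ltnP j (size [seq Some x | x <- enum A])) => [j_lt|j_ge]; last first.
    by rewrite nth_default.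
  by move=> e; have := mem_nth None j_lt; rewrite -e (mem_map Some_inj) mem_enum.
apply: leq_trans (subset_leq_card small_sub) _; apply: leq_trans (leq_imset_card _ _) _.
by rewrite cardsT card_ffun card_option card_ord.
Qed.

Definition inU0234 (p p0 M : nat) (A : {set 'I_p}) : bool :=
  [|| A == A0 p p0, inU2 A, inU3 p0 A | inU4 p0 M A].

Lemma card_A0 p p0 : (#|A0 p p0| <= p0)%N.
Proof.
rewrite cardE -(size_map val) -[X in (_ <= X)%N](size_iota 0).
apply: uniq_leq_size; first by rewrite (map_inj_uniq val_inj) enum_uniq.
by move=> x /mapP[k]; rewrite mem_enum inE => k_lt ->; rewrite mem_iota.
Qed.

Lemma card_inU0234 p p0 M (A : {set 'I_p}) : (0 < p0)%N -> (p0 <= M)%N ->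
  inU0234 p0 M A -> (#|A| <= p0 + M)%N.
Proof.
move=> p0_gt0 p0_le_M; have card_A0U (I : {set 'I_p}) : (#|A0 p p0 :|: I| <= p0 + #|I|)%N.
  by apply: leq_trans (leq_card_setU _ _) _; rewrite leq_add2r card_A0.
case/or4P => [/eqP-> | /eqP-> | /existsP[I /and3P[_ /eqP I1 /eqP->]]
                           | /existsP[I /and3P[_ /eqP IM /eqP->]]].
- exact: leq_trans (card_A0 _ _) (leq_addr _ _).
- exact: leq_add p0_gt0 (leq_trans p0_gt0 p0_le_M).
- by apply: leq_trans (card_A0U I) _; rewrite I1 leq_add2l (leq_trans p0_gt0 p0_le_M).
- by apply: leq_trans (card_A0U I) _; rewrite IM leq_add2l leq_subr.
Qed.

Lemma Deltas_leP (R : realType) n p p0 M (X : 'M[R]_(n, p)) t : 0 <= t ->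
  [/\ Delta_p0 p0 X <= t, Delta_2 X <= t, Delta_p0_1 p0 X <= t & Delta_p0_M1 p0 M X <= t] <->
  forall A, inU0234 p0 M A -> disc (subm X A) <= t.
Proof.
move=> t_ge0; split=> [[le0 le2 le3 le4] A | le_all].
  by case/or4P => [/eqP-> | A2 | A3 | A4] //; [apply: le_trans le2 | apply: le_trans le3
    | apply: le_trans le4]; exact: le_bigmax_cond.
split; first by apply: le_all; rewrite /inU0234 eqxx.
all: by apply: bigmax_le => // A UA; apply: le_all; rewrite /inU0234 UA !orbT.
Qed.

Lemma Deltas_le_of_grid (R : realType) n p p0 M (X : 'M[R]_(n, p)) t tau :
  (0 < p0)%N -> (p0 <= M)%N -> (0 < n)%N -> 0 <= tau -> tau + (p0 + M)%:R / n%:R <= t ->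
  (forall A : {set 'I_p}, (#|A| <= p0 + M)%N -> forall h : {ffun 'I_#|A| -> 'I_n.+1},
     local_disc (subm X A) (grid_pt h) <= tau) ->
  [/\ Delta_p0 p0 X <= t, Delta_2 X <= t, Delta_p0_1 p0 X <= t & Delta_p0_M1 p0 M X <= t].
Proof.
move=> p0_gt0 p0_le_M n_gt0 tau_ge0 tau_t grid_le.
have t_ge0 : 0 <= t by apply: le_trans tau_t; rewrite addr_ge0 ?divr_ge0 ?ler0n.
apply/(Deltas_leP p0 M X t_ge0) => A UA; have A_le := card_inU0234 p0_gt0 p0_le_M UA.
apply: le_trans (disc_le_grid n_gt0 (grid_le A A_le)) _.
by apply: le_trans tau_t; rewrite lerD2l ler_wpM2r ?invr_ge0 ?ler0n // ler_nat.
Qed.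

Section PowerAsymptotics.
Variable R : realType.

Lemma ln_le_powR (x e : R) : 0 < x -> 0 < e -> ln x <= x `^ e / e.
Proof.
move=> x_gt0 e_gt0; rewrite ler_pdivlMr // mulrC -ln_powR.
exact/ltW/ln_sublinear/powR_gt0.
Qed.

Lemma natr_powR_add (n : nat) (r s : R) : (0 < n)%N -> n%:R `^ (r + s) = n%:R `^ r * n%:R `^ s.
Proof. by move=> n_gt0; rewrite powRD // pnatr_eq0 -lt0n n_gt0 implybT. Qed.

Lemma near_powR_ge (e K : R) : 0 < e -> \forall n \near \oo, K <= n%:R `^ e.
Proof.
move=> e_gt0; pose K1 := Num.max K 1.
have K1_gt0 : 0 < K1 by rewrite lt_max ltr01 orbT.
near=> n; apply: (@le_trans _ _ K1); first by rewrite le_max lexx.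
have -> : K1 = (K1 `^ e^-1) `^ e by rewrite -powRrM mulVf ?gt_eqF // powRr1 // ltW.
apply: ge0_ler_powR; rewrite ?nnegrE ?powR_ge0 ?ler0n ?ltW //.
by near: n; exact: nbhs_infty_gtr.
Unshelve. all: by end_near. Qed.

Lemma near_powR_dominates (a b C K : R) : 0 <= b -> b < a ->
  \forall n \near \oo, C + K * n%:R `^ b <= n%:R `^ a.
Proof.
move=> b_ge0 b_lt_a; near=> n.
have n_gt0 : (0 < n)%N by near: n; exact: nbhs_infty_gt.
have split_a : n%:R `^ a = n%:R `^ (a - b) * n%:R `^ b by rewrite -natr_powR_add // subrK.
have : 2 * K <= n%:R `^ (a - b) by near: n; apply: near_powR_ge; lra.
have : 2 * C <= n%:R `^ a by near: n; apply: near_powR_ge; lra.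
have := powR_ge0 n%:R b; nra.
Unshelve. all: by end_near. Qed.

Lemma natr_expS_le (x K : nat) : (0 < x)%N ->
  (x.+1 ^ K)%:R <= expR (K%:R * (ln 2 + ln x%:R)) :> R.
Proof.
move=> x_gt0; have x_ge1 : (1 : R) <= x%:R by rewrite ler1n.
rewrite natrX -lnM ?posrE ?ltr0n // expRM_natl lnK ?posrE; last by rewrite mulr_gt0 ?ltr0n.
by rewrite lerXn2r ?nnegrE ?ler0n ?mulr_ge0 // -natr1; lra.
Qed.

End PowerAsymptotics.

Section FailureProbability.
Context (R : realType) (d : measure_display) (T : measurableType d).
Variables (P : probability T R) (p : nat -> nat) (p0 M : nat) (X : forall n, T -> 'M[R]_(n, p n)).
Hypotheses (p0_gt0 : (0 < p0)%N) (p0_le_M : (p0 <= M)%N) (HA5 : A5 P X).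

Definition Deltas_le n t := [set w | [/\ Delta_p0 p0 (X n w) <= t, Delta_2 (X n w) <= t,
  Delta_p0_1 p0 (X n w) <= t & Delta_p0_M1 p0 M (X n w) <= t]].

Lemma measurable_Deltas_le n t : 0 <= t -> measurable (Deltas_le n t).
Proof.
move=> t_ge0; rewrite (_ : Deltas_le n t =
    [set w | forall A, inU0234 p0 M A -> disc (subm (X n w) A) <= t]).
  by apply: measurable_forall => A; exact/measurable_disc_le/measurable_subm_entry.
by apply/seteqP; split=> w /Deltas_leP; apply.
Qed.

Lemma pr_not_Deltas_le n t tau : (0 < n)%N -> 0 < tau <= 1 ->
  tau + (p0 + M)%:R / n%:R <= t ->
  1 - pr P (Deltas_le n t) <=
    ((p n).+1 ^ (p0 + M) * n.+1 ^ (p0 + M))%N%:R * (2 * expR (- (n%:R * tau ^+ 2 / 8))).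
Proof.
move=> n_gt0 /andP[tau_gt0 tau_le1] tau_t; set D := (p0 + M)%N; set beta := 2 * expR _.
have beta_ge0 : 0 <= beta by rewrite mulr_ge0 ?expR_ge0.
have t_ge0 : 0 <= t by apply: le_trans tau_t; rewrite addr_ge0 ?divr_ge0 ?ler0n ?ltW.
set S := [set A : {set 'I_(p n)} | (#|A| <= D)%N]%SET.
have cover : ~` Deltas_le n t `<=` [set w | exists A, A \in S /\ grid_exceed X A tau w].
  move=> w /= not_le; apply: contrapT => none; apply: not_le.
  apply: Deltas_le_of_grid p0_gt0 p0_le_M n_gt0 (ltW tau_gt0) tau_t _ => A A_le h.
  by rewrite leNgt; apply/negP => gt_tau; apply: none; exists A; split; [rewrite inE | exists h].
rewrite -pr_setC; last exact: measurable_Deltas_le.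
apply: le_trans (le_pr P _ _ cover) _.
- exact/measurableC/measurable_Deltas_le.
- by apply: measurable_exists => A; exact: measurable_grid_exceed.
apply: le_trans (pr_exists_le P _ (fun A => measurable_grid_exceed HA5 A tau)) _.
apply: (@le_trans _ _ (\sum_(A in S) (n.+1 ^ D)%:R * beta)).
  apply: ler_sum => A; rewrite inE => A_le.
  apply: le_trans (pr_grid_exceed_le HA5 A n_gt0 _) _; first by apply/andP; split; lra.
  by rewrite ler_wpM2r // ler_nat leq_pexp2l.
rewrite sumr_const -[_ *+ #|S|]mulr_natr mulrAC ler_wpM2r // -natrM ler_nat mulnC leq_mul //.
by have := card_small_sets 'I_(p n) D; rewrite card_ord.
Qed.

Lemma pr_not_Deltas_le_powR n g : (0 < n)%N -> (0 < p n)%N -> 0 <= g ->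
  2 * (p0 + M)%:R <= n%:R `^ (1 - g) ->
  1 - pr P (Deltas_le n (n%:R `^ (- g))) <=
    expR (ln 2 + (p0 + M)%:R * (2 * ln 2 + ln (p n)%:R + ln n%:R) - n%:R `^ (1 - 2 * g) / 32).
Proof.
move=> n_gt0 p_gt0 g_ge0 D_le; set D := (p0 + M)%N; set t := n%:R `^ (- g).
have n_pos : (0 : R) < n%:R by rewrite ltr0n.
have t_gt0 : 0 < t by rewrite powR_gt0.
have t_le1 : t <= 1 by rewrite -(powRr0 n%:R) ler_powR ?ler1n // oppr_le0.
have tn : t * n%:R = n%:R `^ (1 - g).
  by rewrite -[X in _ * X](powRr1 (ler0n _ n)) -natr_powR_add // addrC.
have tau_t : t / 2 + D%:R / n%:R <= t.
  have : 2 * (D%:R / n%:R) * n%:R <= t * n%:R by rewrite -mulrA mulfVK ?gt_eqF // tn.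
  by rewrite ler_pM2r // => ?; lra.
have tau_le1 : 0 < t / 2 <= 1 by apply/andP; split; lra.
apply: le_trans (pr_not_Deltas_le n_gt0 tau_le1 tau_t) _.
have expo : n%:R * (t / 2) ^+ 2 / 8 = n%:R `^ (1 - 2 * g) / 32.
  have -> : n%:R `^ (1 - 2 * g) = n%:R * t ^+ 2.
    rewrite expr2 /t -[X in _ = X * _](powRr1 (ler0n _ n)) -!natr_powR_add //.
    by congr (_ `^ _); ring.
  by field.
rewrite expo natrM.
have -> : expR (ln 2 + D%:R * (2 * ln 2 + ln (p n)%:R + ln n%:R) - n%:R `^ (1 - 2 * g) / 32) =
    expR (D%:R * (ln 2 + ln (p n)%:R)) * expR (D%:R * (ln 2 + ln n%:R)) *
    (2 * expR (- (n%:R `^ (1 - 2 * g) / 32))).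
  by rewrite -[X in _ * (X * expR _)]lnK ?posrE // -!expRD; congr expR; ring.
by rewrite ler_wpM2r ?mulr_ge0 ?expR_ge0 // ler_pM ?ler0n ?natr_expS_le.
Qed.

End FailureProbability.

Unset Implicit Arguments. Set Strict Implicit.
Theorem lemma9 (R : realType) (dT : measure_display) (T : measurableType dT)
  (P : probability T R)
  (p : nat -> nat) (p0 M : nat)
  (X : forall n, T -> 'M[R]_(n, p n))
  (f : forall n, 'rV[R]_(p n) -> R) (ft : forall n, 'rV[R]_p0 -> R) (eta : nat -> R)
  (beta0 : forall n, {set 'I_(p n)} -> R)
  (beta : forall n, {set 'I_(p n)} -> 'I_(p n) -> R)
  (g1 g2 g3 g4 g5 g6 g7 g10 : R) :
  (1 <= p0)%N -> (p0 <= M)%N -> (forall n, (p0 < p n)%N) ->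
  (forall n, {within cube (p n), continuous (f n)}) ->
  (forall n, {within cube p0, continuous (ft n)}) ->
  (forall n, 0 < eta n) ->
  (forall n (A : {set 'I_(p n)}), bestlin (f n) A (beta0 n A) (beta n A)) ->
  A5 P X ->
  @A6 R p p0 M f ft eta beta0 beta g1 g2 g3 g4 g5 g6 g7 g10 ->
  forall g0 : R, 0 < g0 -> g0 < (1 - g10) / 2 ->
  (fun n => P [set w | [/\ Delta_p0 p0 (X n w) <= n%:R `^ (- g0),
                          Delta_2 (X n w) <= n%:R `^ (- g0),
                          Delta_p0_1 p0 (X n w) <= n%:R `^ (- g0) &
                          Delta_p0_M1 p0 M (X n w) <= n%:R `^ (- g0)]])
    @ \oo --> 1%E.
Proof.
move=> p0_gt0 p0_le_M p0_lt_p _ _ _ _ HA5 HA6 g0 g0_gt0 g0_lt.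
have [_ [_ [_ [_ [_ [_ [_ [[c [N ln_p_le]] [_ [g10_gt0 _]]]]]]]]]] := HA6.
set D := (p0 + M)%N.
have measurable_event n : measurable (Deltas_le p0 M X n (n%:R `^ (- g0))).
  exact: (measurable_Deltas_le p0 M HA5 n (powR_ge0 _ _)).
change ((fun n => P (Deltas_le p0 M X n (n%:R `^ (- g0)))) @ \oo --> 1%E).
apply: cvg_EFin; first by near=> n; exact: fin_num_measure.
apply/cvgrPdist_le => e e_gt0; near=> n.
have n_gt0 : (0 < n)%N by near: n; exact: nbhs_infty_gt.
have p_gt0 : (0 < p n)%N by apply: leq_ltn_trans (p0_lt_p n).
rewrite ger0_norm ?subr_ge0 ?pr_le1 //.
apply: le_trans (pr_not_Deltas_le_powR p0_gt0 p0_le_M HA5 n_gt0 p_gt0 (ltW g0_gt0) _) _.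
  by near: n; apply: near_powR_ge; lra.
rewrite -[leRHS](lnK e_gt0) ler_expR.
have ln_p : D%:R * ln (p n)%:R <= D%:R * (c * n%:R `^ g10).
  by rewrite ler_wpM2l // (le_trans (ler_norm _)) // ln_p_le //; near: n; exact: nbhs_infty_ge.
have ln_n : D%:R * ln n%:R <= D%:R * (n%:R `^ g10 / g10).
  by rewrite ler_wpM2l // ln_le_powR // ltr0n.
have : 32 * (ln 2 + 2 * D%:R * ln 2 - ln e) + 32 * (D%:R * (c + g10^-1)) * n%:R `^ g10
    <= n%:R `^ (1 - 2 * g0).
  by near: n; apply: near_powR_dominates; lra.
by rewrite -/D; lra.
Unshelve. all: by end_near. Qed.
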